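(* Let $T\subset\mathbb{S}^{d-1}$ be a path simplex with vertices $p_1,\dots,p_d$ ordered along its path, and let $g_i$ be the inward facing normal to the facet opposite $p_i$. Then the Gram matrix $G_T^tG_T$, where $G_T=[g_1\,\cdots\,g_d]$, is tridiagonal, i.e. $g_i\cdot g_j=0$ whenever $|i-j|\ge 2$.
   Context: A spherical simplex in $\mathbb{S}^{d-1}\subset\mathbb{R}^d$ with vertices $p_1,\dots,p_d$ (linearly independent unit vectors) is $\mathbb{S}^{d-1}$ intersected with the cone $\{\sum_i\lambda_ip_i:\lambda_i\ge 0\}$; its facet $F_i$ is the face not containing $p_i$, and the inward normal $g_i$ is a vector orthogonal to the span of $\{p_j:j\ne i\}$ with $g_i\cdot p_i>0$. A path simplex is a spherical simplex whose vertices can be ordered $p_1,\dots,p_d$ so that the edges $p_1p_2,\dots,p_{d-1}p_d$ form a path whose edges are mutually at right angles in the following sense: for each $1\le i\le d-1$, the tangent vector $p_i-(p_i\cdot p_{i+1})p_{i+1}$ of the arc $p_ip_{i+1}$ at $p_{i+1}$ is orthogonal to each of $p_{i+1},\dots,p_d$. The endpoints $p_1,p_d$ of the path are its end vertices. *)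

From mathcomp Require Import all_boot all_order all_algebra.
Set Implicit Arguments. Unset Strict Implicit. Unset Printing Implicit Defensive.
Import Order.TTheory GRing.Theory Num.Theory.
Local Open Scope ring_scope.

Definition dot (R : realFieldType) (d : nat) (u v : 'rV[R]_d) : R :=
  \sum_(k < d) u 0 k * v 0 k.

Definition vert_mx (R : realFieldType) (d : nat) (p : 'I_d -> 'rV[R]_d)
  : 'M[R]_d := \matrix_(i < d, k < d) p i 0 k.

Definition spherical_simplex (R : realFieldType) (d : nat)
  (p : 'I_d -> 'rV[R]_d) : Prop :=
  (forall i, dot (p i) (p i) = 1) /\ row_free (vert_mx p).

(* path condition, vertices already ordered along the path: for each
   consecutive pair (p_i, p_{i+1}), the tangent p_i - (p_i.p_{i+1}) p_{i+1}
   is orthogonal to p_{i+1}, ..., p_d *)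
Definition path_simplex (R : realFieldType) (d : nat)
  (p : 'I_d -> 'rV[R]_d) : Prop :=
  spherical_simplex p /\
  (forall i j k : 'I_d, nat_of_ord j = i.+1 -> (j <= k)%N ->
     dot (p i - dot (p i) (p j) *: p j) (p k) = 0).

Definition inward_normal (R : realFieldType) (d : nat)
  (p : 'I_d -> 'rV[R]_d) (i : 'I_d) (g : 'rV[R]_d) : Prop :=
  (forall j, j != i -> dot g (p j) = 0) /\ 0 < dot g (p i).

(* G_T = [g_1 ... g_d] (columns); Gram matrix G_T^t G_T *)
Definition normal_mx (R : realFieldType) (d : nat) (g : 'I_d -> 'rV[R]_d)
  : 'M[R]_d := \matrix_(k < d, i < d) g i 0 k.

(* Write e_i := p_i - (p_i . p_(i+1)) p_(i+1) for the tangent vectors of the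
   path.  A vector orthogonal to p_(n+1), ..., p_d splits, by one Gram-Schmidt
   step against e_n, into a vector orthogonal to p_n, ..., p_d plus a multiple
   of e_n.  Since e_n lies in span(p_n, p_(n+1)), induction on n shows that a
   vector orthogonal to p_k for all k >= n is orthogonal to every g_j with
   j > n.  The normal g_i is orthogonal to p_k for all k >= i + 1, hence to
   every g_j with j >= i + 2.  Neither the unit length of the p_i nor the
   sign of g_i . p_i is needed. *)

From mathcomp Require Import all_boot all_order all_algebra.
Set Implicit Arguments. Unset Strict Implicit. Unset Printing Implicit Defensive.
Import Order.TTheory GRing.Theory Num.Theory.
Local Open Scope ring_scope.

Section Dot.
Variables (R : realFieldType) (d : nat).
Implicit Types u v w e : 'rV[R]_d.

Lemma dotC u v : dot u v = dot v u.
Proof. by apply: eq_bigr => k _; rewrite mulrC. Qed.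

Lemma dotDl u v w : dot (u + v) w = dot u w + dot v w.
Proof. by rewrite /dot -big_split; apply: eq_bigr => k _; rewrite mxE mulrDl. Qed.

Lemma dot0l u : dot 0 u = 0.
Proof. by rewrite /dot big1 // => k _; rewrite mxE mul0r. Qed.

Lemma dotZl a u w : dot (a *: u) w = a * dot u w.
Proof. by rewrite /dot mulr_sumr; apply: eq_bigr => k _; rewrite mxE mulrA. Qed.

Lemma dotNl u w : dot (- u) w = - dot u w.
Proof. by rewrite -scaleN1r dotZl mulN1r. Qed.

Lemma dotBl u v w : dot (u - v) w = dot u w - dot v w.
Proof. by rewrite dotDl dotNl. Qed.

Lemma dotDr u v w : dot w (u + v) = dot w u + dot w v.
Proof. by rewrite ![dot w _]dotC dotDl. Qed.

Lemma dotZr a u w : dot w (a *: u) = a * dot w u.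
Proof. by rewrite ![dot w _]dotC dotZl. Qed.

Lemma dot_self_eq0 u : (dot u u == 0) = (u == 0).
Proof.
apply/idP/eqP => [/eqP uu0|->]; last by rewrite dot0l.
apply/rowP => k; rewrite mxE; apply/eqP.
have /eqP : u 0 k * u 0 k = 0.
  by move: uu0 => /psumr_eq0P; apply=> // i _; rewrite -expr2 sqr_ge0.
by rewrite mulf_eq0 orbb.
Qed.

Definition orth_proj e v := (dot v e / dot e e) *: e.

Lemma dot_sub_orth_proj e v : dot (v - orth_proj e v) e = 0.
Proof.
rewrite dotBl dotZl; have [/eqP|ee_neq0] := eqVneq (dot e e) 0.
  by rewrite dot_self_eq0 => /eqP->; rewrite dotC !dot0l mulr0 subr0.
by rewrite divfK ?subrr.
Qed.

Lemma gram_mx_entry (g : 'I_d -> 'rV[R]_d) i j :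
  ((normal_mx g)^T *m normal_mx g) i j = dot (g i) (g j).
Proof. by rewrite !mxE; apply: eq_bigr => k _; rewrite !mxE. Qed.

Lemma orth_row_free_eq0 (p : 'I_d -> 'rV[R]_d) v :
  row_free (vert_mx p) -> (forall k, dot v (p k) = 0) -> v = 0.
Proof.
rewrite row_free_unit => p_unit v_perp.
have pv0 : vert_mx p *m v^T = 0.
  apply/matrixP => i j; rewrite !mxE -[RHS](v_perp i) dotC.
  by apply: eq_bigr => k _; rewrite !mxE (ord1 j).
by apply: trmx_inj; rewrite -(mulKmx p_unit v^T) pv0 mulmx0 trmx0.
Qed.

End Dot.

Section PathSimplex.
Variables (R : realFieldType) (d : nat) (p g : 'I_d -> 'rV[R]_d).
Hypothesis p_free : row_free (vert_mx p).

Definition tangent (a b : 'I_d) := p a - dot (p a) (p b) *: p b.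

Hypothesis tangent_perp : forall a b k : 'I_d,
  nat_of_ord b = a.+1 -> (b <= k)%N -> dot (tangent a b) (p k) = 0.
Hypothesis g_perp : forall j k : 'I_d, k != j -> dot (g j) (p k) = 0.

Definition perp_tail (n : nat) v := forall k : 'I_d, (n <= k)%N -> dot v (p k) = 0.

Lemma perp_tail_sub_orth_proj (a b : 'I_d) v : nat_of_ord b = a.+1 ->
  perp_tail b v -> perp_tail a (v - orth_proj (tangent a b) v).
Proof.
move=> ba v_perp k; rewrite leq_eqVlt => /predU1P[ak | ltak]; last first.
  by rewrite dotBl dotZl v_perp ?tangent_perp ?ba // mulr0 subr0.
have -> : k = a by exact: val_inj.
have -> : p a = tangent a b + dot (p a) (p b) *: p b by rewrite subrK.
rewrite dotDr dotZr dot_sub_orth_proj add0r.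
by rewrite dotBl dotZl v_perp ?tangent_perp ?ba // mulr0 subr0 mulr0.
Qed.

Lemma perp_tail_dot_normal n v :
  perp_tail n v -> forall j : 'I_d, (n < j)%N -> dot v (g j) = 0.
Proof.
elim: n v => [|n IHn] v v_perp j ltnj.
  by rewrite (orth_row_free_eq0 p_free (fun k => v_perp k (leq0n k))) dot0l.
have ltn1d : (n.+1 < d)%N := ltn_trans ltnj (ltn_ord j).
pose a := Ordinal (ltnW ltn1d); pose b := Ordinal ltn1d.
have ba : nat_of_ord b = a.+1 by [].
have aj : a != j by apply/eqP => /(congr1 val) /= aj; rewrite aj ltnNge leqnSn in ltnj.
have bj : b != j by apply/eqP => /(congr1 val) /= bj; rewrite bj ltnn in ltnj.
have tangent_g : dot (tangent a b) (g j) = 0.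
  by rewrite dotBl dotZl ![dot _ (g j)]dotC !g_perp // mulr0 subr0.
rewrite -(subrK (orth_proj (tangent a b) v) v) dotDl.
rewrite (IHn _ (perp_tail_sub_orth_proj ba v_perp)); last exact: ltnW.
by rewrite add0r dotZl tangent_g mulr0.
Qed.

Lemma normal_dot_eq0 (i j : 'I_d) : (i + 2 <= j)%N -> dot (g i) (g j) = 0.
Proof.
rewrite addn2 => lt_i1j; apply: (perp_tail_dot_normal (n := i.+1)) => // k ltik.
by apply: g_perp; apply/eqP => /(congr1 val) /= ki; rewrite ki ltnn in ltik.
Qed.

End PathSimplex.

Theorem claim4p3 (R : realFieldType) (d : nat)
  (p g : 'I_d -> 'rV[R]_d) :
  path_simplex p ->
  (forall i, inward_normal p i (g i)) ->
  forall i j : 'I_d, ((i + 2 <= j) || (j + 2 <= i))%N ->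
    ((normal_mx g)^T *m normal_mx g) i j = 0.
Proof.
move=> [[_ p_free] p_path] g_normal i j far.
have g_perp j' k : k != j' -> dot (g j') (p k) = 0 by move/(proj1 (g_normal j')).
rewrite gram_mx_entry; case/orP: far => [lt_ij | lt_ji].
  exact: (normal_dot_eq0 p_free p_path g_perp lt_ij).
by rewrite dotC; apply: (normal_dot_eq0 p_free p_path g_perp lt_ji).
Qed.
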